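(* There is an absolute constant $\kappa>0$ such that for every set $C$ of concepts over $\{0,1\}^n$ with $|C|\ge2$, every quantum network that exactly learns $C$ from quantum membership queries (i.e. for every $c\in C$, when its oracle gates are $QMQ_c$, it outputs with probability at least $2/3$ a representation of a Boolean circuit $h$ with $h(x)=c(x)$ for all $x$) has query complexity at least $\kappa\,(1/\hat\gamma^{C})^{1/2}$. In other words, any quantum exact learning algorithm for $C$ has sample complexity $\Omega((1/\hat\gamma^C)^{1/2})$.
   Context: For $C'\subseteq C$, $a\in\{0,1\}^n$, $b\in\{0,1\}$: $C'_{\langle a,b\rangle}=\{c\in C': c(a)=b\}$, $\gamma^{C'}_{\langle a,b\rangle}=|C'_{\langle a,b\rangle}|/|C'|$, $\gamma^{C'}_a=\min_b\gamma^{C'}_{\langle a,b\rangle}$, $\gamma^{C'}=\max_a\gamma^{C'}_a$, and $\hat\gamma^{C}=\min_{C'\subseteq C,|C'|\ge2}\gamma^{C'}$. A quantum network on an $m$-qubit register is a sequence $U_0,O_1,U_1,\dots,O_T,U_T$ of unitaries applied to $|0^m\rangle$, the $U_i$ arbitrary fixed unitaries and each $O_i$ an oracle gate, followed by a computational-basis measurement of some qubits whose outcome is the output; $T$ is the query complexity. The gate $QMQ_c$ maps $|x,b,y\rangle$ to $|x,b\oplus c(x),y\rangle$ for $x\in\{0,1\}^n$, $b\in\{0,1\}$. *)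

From HB Require Import structures.
From mathcomp Require Import all_boot all_order all_algebra.
From mathcomp Require Import complex.
From mathcomp Require Import Rstruct.
From Stdlib Require Rdefinitions.
Notation R := Rdefinitions.R.
Set Implicit Arguments. Unset Strict Implicit. Unset Printing Implicit Defensive.
Import Order.TTheory GRing.Theory Num.Theory.
Local Open Scope ring_scope.

Definition point (n : nat) := n.-tuple bool.
Definition concept (n : nat) := {ffun point n -> bool}.

Definition gamma_ab n (C' : {set concept n}) (a : point n) (b : bool) : R :=
  #|[set c in C' | c a == b]|%:R / #|C'|%:R.
Definition gamma_a n (C' : {set concept n}) (a : point n) : R :=
  Num.min (gamma_ab C' a false) (gamma_ab C' a true).
(* max over a; all values are >= 0 and the index set is nonempty *)
Definition gamma n (C' : {set concept n}) : R :=
  \big[Num.max/0]_(a : point n) gamma_a C' a.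
(* min over subsets C' of C with |C'| >= 2; all values are <= 1 *)
Definition gammahat n (C : {set concept n}) : R :=
  \big[Num.min/1]_(C' : {set concept n} | (C' \subset C) && (2 <= #|C'|)%N) gamma C'.

(** Quantum networks.  The register has m = n + 1 + k qubits; a computational
    basis state is |x, b, y> with x in {0,1}^n, b in {0,1}, y in {0,1}^k. *)
Definition basis (n k : nat) := (point n * bool * k.-tuple bool)%type.
Notation Cx := (complex R).
Definition qvec n k := basis n k -> Cx.
Definition qop n k := basis n k -> basis n k -> Cx. (* matrices, A s t = <s|A|t> *)

Definition conjz (z : Cx) : Cx := Complex (complex.Re z) (- complex.Im z).
Definition sqnorm (z : Cx) : R := complex.Re z ^+ 2 + complex.Im z ^+ 2.

Definition apply n k (A : qop n k) (v : qvec n k) : qvec n k :=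
  fun s => \sum_(t : basis n k) A s t * v t.

(* A^dagger A = I (equivalent to unitarity in finite dimension) *)
Definition unitary n k (A : qop n k) : Prop :=
  forall s t : basis n k, \sum_(u : basis n k) conjz (A u s) * A u t = (s == t)%:R.

Definition zero_state n k : qvec n k :=
  fun s => (s == ([tuple of nseq n false], false, [tuple of nseq k false]))%:R.

Definition QMQ n k (c : concept n) : qop n k :=
  fun s t => (s == (t.1.1, t.1.2 (+) c t.1.1, t.2))%:R.

(* state after U_0, O_1, U_1, ..., O_i, U_i *)
Fixpoint run n k (U : nat -> qop n k) (c : concept n) (i : nat) : qvec n k :=
  match i with
  | 0 => apply (U 0%N) (@zero_state n k)
  | j.+1 => apply (U i) (apply (@QMQ n k c) (run U c j))
  end.

(* Output: computational-basis measurement of the register; the measured string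
   is interpreted by [dec] as (the function computed by) a Boolean circuit h,
   or [None] if it is not a valid circuit representation. *)
Definition success_prob n k (U : nat -> qop n k) (T : nat)
    (dec : basis n k -> option (concept n)) (c : concept n) : R :=
  \sum_(s : basis n k | dec s == Some c) sqnorm (run U c T s).

From HB Require Import structures.
From mathcomp Require Import all_boot all_order all_algebra.
From mathcomp Require Import complex.
From mathcomp Require Import Rstruct.
From mathcomp Require Import ring lra.
From Stdlib Require Rdefinitions.
Import Order.TTheory GRing.Theory Num.Theory.
Local Open Scope ring_scope.
Set Implicit Arguments. Unset Strict Implicit. Unset Printing Implicit Defensive.

(* A hybrid argument.  Let B be a subset of C attaining gammahat C and m its
   majority concept.  Replacing the oracle of m by that of c moves the final
   state, in squared norm, by at most 4 T times the total squared amplitude that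
   the T queries of the run on m place on points where c and m disagree.  Every
   point is a disagreement point for at most gamma(B) |B| concepts of B, so on
   average over B the final states lie within squared distance 4 T^2 gamma(B) of
   the final state of m.  On the other hand an exact learner separates any two
   concepts of B, which forces this average above 1/144 (roughly); hence
   T >= sqrt(1 / gammahat C) / 24. *)

Lemma sqrD_le (F : realFieldType) (t x y : F) : 0 < t ->
  (x + y) ^+ 2 <= (1 + t) * x ^+ 2 + (1 + t^-1) * y ^+ 2.
Proof.
move=> t_gt0; rewrite -subr_ge0.
have -> : (1 + t) * x ^+ 2 + (1 + t^-1) * y ^+ 2 - (x + y) ^+ 2
          = t^-1 * (t * x - y) ^+ 2 by field; exact: lt0r_neq0.
by rewrite pmulr_rge0 ?invr_gt0 ?sqr_ge0.
Qed.

Lemma sqrt_inv_le (F : rcfType) (g x : F) :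
  0 <= x -> 1 <= x ^+ 2 * g -> Num.sqrt (1 / g) <= x.
Proof.
move=> x_ge0 one_le.
have g_gt0 : 0 < g.
  rewrite ltNge; apply/negP => g_le0.
  have : x ^+ 2 * g <= 0 by rewrite mulr_ge0_le0 ?sqr_ge0.
  by rewrite leNgt (lt_le_trans ltr01 one_le).
rewrite -(ger0_norm x_ge0) -sqrtr_sqr ler_wsqrtr //.
by rewrite ler_pdivrMr.
Qed.

Lemma sum_ge_pairwise (F : realFieldType) (I : finType) (A : {set I}) (D : I -> F) d :
  (0 < #|A|)%N -> (forall i, 0 <= D i) ->
  (forall i j, i \in A -> j \in A -> i != j -> d <= D i + D j) ->
  (#|A|%:R - 1) * (d / 2) <= \sum_(i in A) D i.
Proof.
move=> A_gt0 D_ge0 D_pair.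
have [i0 i0A] : exists i0, i0 \in A by apply/set0Pn; rewrite -card_gt0.
have [i1 i1A i1_min] : exists2 i1, i1 \in A & forall i, i \in A -> D i1 <= D i.
  by case: (arg_minP D i0A) => i; exists i.
rewrite (big_setD1 i1 i1A) (cardsD1 i1 A) i1A add1n -natr1 addrK -[X in X <= _]add0r.
apply: lerD; first exact: D_ge0.
rewrite mulr_natl -sumr_const; apply: ler_sum => i /setD1P[ne_i_i1 iA].
by have := D_pair i i1 iA i1A ne_i_i1; have := i1_min i iA; lra.
Qed.

Lemma sum_indicator (V : pzSemiRingType) (I : finType) (A : {set I}) (P : pred I) :
  \sum_(i in A) (P i)%:R = #|[set i in A | P i]|%:R :> V.
Proof.
rewrite -sumr_const [RHS]big_mkcond [LHS]big_mkcond; apply: eq_bigr => i _.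
by rewrite inE; case: (i \in A); case: (P i).
Qed.

Lemma conjzE (z : Cx) : conjz z = z^*%C.
Proof. by case: z. Qed.

Lemma sqnormE (z : Cx) : (sqnorm z)%:C%C = z^*%C * z.
Proof.
case: z => a b; rewrite /sqnorm /=; simpc; rewrite -complexr0.
by congr Complex; ring.
Qed.

Lemma sqnorm_ge0 (z : Cx) : 0 <= sqnorm z.
Proof. by rewrite /sqnorm addr_ge0 ?sqr_ge0. Qed.

Lemma sqnormN (z : Cx) : sqnorm (- z) = sqnorm z.
Proof. by case: z => a b; rewrite /sqnorm /= !sqrrN. Qed.

Lemma sqnormD_le (t : R) (a b : Cx) : 0 < t ->
  sqnorm (a + b) <= (1 + t) * sqnorm a + (1 + t^-1) * sqnorm b.
Proof.
case: a b => a1 a2 [b1 b2] t_gt0; rewrite /sqnorm /=.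
have := sqrD_le a1 b1 t_gt0; have := sqrD_le a2 b2 t_gt0; lra.
Qed.

Lemma sqnormB_le (a b : Cx) : sqnorm (a - b) <= 2 * sqnorm a + 2 * sqnorm b.
Proof. by have := sqnormD_le a (- b) ltr01; rewrite sqnormN invr1. Qed.

Section Vectors.
Variable I : finType.
Implicit Types (P Q : pred I) (u v w : I -> Cx).

Definition vnorm2 v : R := \sum_i sqnorm (v i).
Definition vdist2 v w : R := vnorm2 (fun i => v i - w i).

Lemma vnorm2_ge0 v : 0 <= vnorm2 v.
Proof. by apply: sumr_ge0 => i _; apply: sqnorm_ge0. Qed.

Lemma vnorm2_reindex (f : I -> I) v : injective f -> vnorm2 (fun i => v (f i)) = vnorm2 v.
Proof. by move=> f_inj; rewrite /vnorm2 [RHS](reindex_inj f_inj). Qed.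

Lemma vdist2C v w : vdist2 v w = vdist2 w v.
Proof. by apply: eq_bigr => i _; rewrite -sqnormN opprB. Qed.

Lemma vdist2_le t u v w : 0 < t ->
  vdist2 u w <= (1 + t) * vdist2 u v + (1 + t^-1) * vdist2 v w.
Proof.
move=> t_gt0; rewrite /vdist2 /vnorm2 !mulr_sumr -big_split /=.
apply: ler_sum => i _; rewrite -[u i - w i](subrKA (v i)).
exact: sqnormD_le.
Qed.

Lemma vdist2_separated P Q v w : (forall i, P i -> ~~ Q i) -> vnorm2 w <= 1 ->
  2 / 3 <= \sum_(i | P i) sqnorm (v i) -> 2 / 3 <= \sum_(i | Q i) sqnorm (w i) ->
  1 / 18 <= vdist2 v w.
Proof.
move=> PQ w_le1 v_P w_Q.
have w_P : \sum_(i | P i) sqnorm (w i) <= 1 / 3.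
  suff : \sum_(i | P i) sqnorm (w i) + \sum_(i | Q i) sqnorm (w i) <= 1 by lra.
  apply: le_trans w_le1; rewrite /vnorm2 [X in _ <= X](bigID P) lerD2l /=.
  rewrite [X in _ <= X]big_mkcond [X in X <= _]big_mkcond /=; apply: ler_sum => i _.
  case: (boolP (P i)) => [/PQ/negbTE -> // | _] /=.
  by case: ifP => // _; apply: sqnorm_ge0.
have v_w : \sum_(i | P i) sqnorm (v i) <=
           4 * \sum_(i | P i) sqnorm (v i - w i) + 4 / 3 * \sum_(i | P i) sqnorm (w i).
  rewrite !mulr_sumr -big_split /=; apply: ler_sum => i _.
  have three_gt0 : (0 : R) < 3 by lra.
  by have := sqnormD_le (v i - w i) (w i) three_gt0; rewrite subrK; lra.
have : \sum_(i | P i) sqnorm (v i - w i) <= vdist2 v w.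
  rewrite /vdist2 /vnorm2 [X in _ <= X](bigID P) /= lerDl.
  by apply: sumr_ge0 => i _; apply: sqnorm_ge0.
lra.
Qed.

End Vectors.

Section Majority.
Variable n : nat.
Implicit Types (C B : {set concept n}) (x : point n).

Lemma gamma_ge0 B : 0 <= gamma B.
Proof. exact: bigmax_ge_id. Qed.

Lemma gamma_le1 B : gamma B <= 1.
Proof.
apply: bigmax_le => // x _; rewrite ge_min /gamma_ab.
case: (posnP #|B|) => [->|B_gt0]; first by rewrite invr0 mulr0 ler01.
rewrite ler_pdivrMr ?ltr0n // mul1r ler_nat subset_leq_card //.
by apply/subsetP => c; rewrite inE => /andP[].
Qed.

Lemma gammahat_attained C : (2 <= #|C|)%N ->
  exists2 B : {set concept n}, (B \subset C) && (2 <= #|B|)%N & gamma B = gammahat C.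
Proof.
move=> C_ge2; have C_admissible : (C \subset C) && (2 <= #|C|)%N by rewrite subxx.
have [B B_admissible E] := @eq_bigmin _ _ _ (1 : R) C
  (fun B => (B \subset C) && (2 <= #|B|)%N) (@gamma n) C_admissible (fun B _ => gamma_le1 B).
by exists B; rewrite // /gammahat E.
Qed.

Definition majority B : concept n :=
  [ffun x => #|[set c in B | c x == false]| <= #|[set c in B | c x == true]|]%N.

Lemma gamma_ab_minority B x : gamma_ab B x (~~ majority B x) = gamma_a B x.
Proof.
rewrite /gamma_a /gamma_ab ffunE.
have [B0|B_gt0] := posnP #|B|; first by rewrite B0 invr0 !mulr0 minxx.
have K_gt0 : 0 < #|B|%:R^-1 :> R by rewrite invr_gt0 ltr0n.
case: leqP => [f_le_t | t_lt_f] /=.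
  by rewrite min_l // ler_pM2r // ler_nat.
by rewrite min_r // ler_pM2r // ler_nat ltnW.
Qed.

Lemma card_gamma_ab B x b :
  #|[set c in B | c x == b]|%:R = gamma_ab B x b * #|B|%:R :> R.
Proof.
rewrite /gamma_ab; have [B0|B_gt0] := posnP #|B|; last by rewrite divfK // pnatr_eq0 -lt0n.
rewrite B0 mulr0; apply/eqP; rewrite pnatr_eq0 -leqn0 -B0 subset_leq_card //.
by apply/subsetP => c; rewrite inE => /andP[].
Qed.

Lemma card_minority_le B x :
  #|[set c in B | c x != majority B x]|%:R <= gamma B * #|B|%:R :> R.
Proof.
have -> : [set c in B | c x != majority B x] = [set c in B | c x == ~~ majority B x].
  by apply: eq_finset => c; case: (c x); case: (majority B x).
rewrite card_gamma_ab gamma_ab_minority ler_wpM2r //.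
exact: (le_bigmax 0 (gamma_a B) x).
Qed.

End Majority.

Section Network.
Variables n k : nat.
Implicit Types (A : qop n k) (v w : qvec n k) (c m : concept n).

Lemma unitary_vnorm2 A v : unitary A -> vnorm2 (apply A v) = vnorm2 v.
Proof.
move=> A_unitary; have {}A_unitary s t : \sum_u (A u s)^*%C * A u t = (s == t)%:R.
  by rewrite -A_unitary; apply: eq_bigr => u _; rewrite conjzE.
apply: complexI; rewrite /vnorm2 !raddf_sum /=.
under eq_bigr do rewrite sqnormE.
under [RHS]eq_bigr do rewrite sqnormE.
rewrite /apply; under eq_bigr => s _ do rewrite rmorph_sum big_distrlr /=.
rewrite exchange_big /=; apply: eq_bigr => t _; rewrite exchange_big /=.
transitivity (\sum_u (v t)^*%C * v u * (t == u)%:R).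
  apply: eq_bigr => u _; rewrite -A_unitary mulr_sumr.
  by apply: eq_bigr => s _; rewrite rmorphM; ring.
rewrite (bigD1 t) //= eqxx mulr1 big1 ?addr0 // => u ne_u_t.
by rewrite eq_sym (negbTE ne_u_t) mulr0.
Qed.

Lemma unitary_vdist2 A v w : unitary A -> vdist2 (apply A v) (apply A w) = vdist2 v w.
Proof.
move=> A_unitary; rewrite /vdist2 -[RHS](unitary_vnorm2 _ A_unitary) /vnorm2 /apply.
by apply: eq_bigr => s _; rewrite -sumrB; congr sqnorm; apply: eq_bigr => t _; ring.
Qed.

(* [QMQ c] permutes the computational basis: it is the involution [flip c]. *)
Definition flip c (s : basis n k) : basis n k := (s.1.1, s.1.2 (+) c s.1.1, s.2).

Lemma flipK c : involutive (flip c).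
Proof. by case=> [[x b] y]; rewrite /flip /= addbK. Qed.

Lemma apply_QMQ c v s : apply (QMQ c) v s = v (flip c s).
Proof.
rewrite /apply /QMQ (bigD1 (flip c s)) //= -[X in X == _](flipK c) eqxx mul1r.
rewrite big1 ?addr0 // => t ne_t; case: eqP => [s_eq|]; last by rewrite mul0r.
by case/eqP: ne_t; rewrite -[t](flipK c); congr flip.
Qed.

Lemma QMQ_vnorm2 c v : vnorm2 (apply (QMQ c) v) = vnorm2 v.
Proof.
rewrite -[RHS](vnorm2_reindex _ (can_inj (flipK c))).
by apply: eq_bigr => s _; rewrite apply_QMQ.
Qed.

Lemma QMQ_vdist2 c v w : vdist2 (apply (QMQ c) v) (apply (QMQ c) w) = vdist2 v w.
Proof.
rewrite /vdist2 -[RHS](vnorm2_reindex _ (can_inj (flipK c))).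
by apply: eq_bigr => s _; rewrite !apply_QMQ.
Qed.

Definition diff_mass c m v : R := \sum_s (c s.1.1 != m s.1.1)%:R * sqnorm (v s).

Lemma vdist2_QMQ_le c m v :
  vdist2 (apply (QMQ c) v) (apply (QMQ m) v) <= 4 * diff_mass c m v.
Proof.
rewrite /vdist2 /vnorm2; under eq_bigr => s _ do rewrite !apply_QMQ.
apply: (@le_trans _ _ (\sum_s ((c s.1.1 != m s.1.1)%:R * (2 * sqnorm (v (flip c s)))
   + (c s.1.1 != m s.1.1)%:R * (2 * sqnorm (v (flip m s)))))).
  apply: ler_sum => s _; case: eqP => [c_eq_m | _]; last by rewrite !mul1r sqnormB_le.
  by rewrite /flip c_eq_m subrr /sqnorm /= expr0n addr0 !mul0r addr0.
rewrite big_split /= (reindex_inj (can_inj (flipK c))) /=.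
rewrite [X in _ + X](reindex_inj (can_inj (flipK m))) /=.
rewrite /diff_mass mulr_sumr -big_split /=; apply: ler_sum => s _.
by rewrite !flipK; lra.
Qed.

Lemma sum_diff_mass_majority (B : {set concept n}) v :
  \sum_(c in B) diff_mass c (majority B) v <= gamma B * #|B|%:R * vnorm2 v.
Proof.
rewrite /diff_mass exchange_big /= /vnorm2 mulr_sumr; apply: ler_sum => s _.
by rewrite -mulr_suml sum_indicator ler_wpM2r ?sqnorm_ge0 ?card_minority_le.
Qed.

Lemma vnorm2_zero_state : vnorm2 (@zero_state n k) = 1.
Proof.
have sqnorm_nat (b : bool) : sqnorm (b%:R : Cx) = b%:R.
  by case: b; rewrite /sqnorm /= ?expr1n ?expr0n /= ?addr0.
rewrite /vnorm2 /zero_state.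
rewrite (bigD1 ([tuple of nseq n false], false, [tuple of nseq k false])) //=.
rewrite eqxx sqnorm_nat big1 ?addr0 //.
by move=> s /negbTE ->; rewrite sqnorm_nat.
Qed.

Variable U : nat -> qop n k.

Lemma vnorm2_run c j : (forall i, (i <= j)%N -> unitary (U i)) -> vnorm2 (run U c j) = 1.
Proof.
elim: j => [|j IH] U_unitary /=.
  by rewrite unitary_vnorm2 ?vnorm2_zero_state //; apply: U_unitary.
rewrite unitary_vnorm2 ?QMQ_vnorm2 ?IH //; last exact: U_unitary.
by move=> i i_le_j; apply: U_unitary; rewrite ltnW.
Qed.

Lemma run_succ c j : run U c j.+1 = apply (U j.+1) (apply (QMQ c) (run U c j)).
Proof. by []. Qed.

Lemma vdist2_run_le c m j : (forall i, (i <= j)%N -> unitary (U i)) ->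
  vdist2 (run U c j) (run U m j) <=
  j%:R * \sum_(i < j) vdist2 (apply (QMQ c) (run U m i)) (apply (QMQ m) (run U m i)).
Proof.
elim: j => [|j IH] U_unitary.
  by rewrite mul0r /vdist2 /vnorm2 big1 // => s _; rewrite subrr /sqnorm /= expr0n addr0.
rewrite !run_succ unitary_vdist2; last exact: U_unitary.
rewrite big_ord_recr /=.
case: j IH U_unitary => [|j] IH U_unitary.
  (* Before the first query the two runs are the same state. *)
  by rewrite big_ord0 add0r mul1r; exact: lexx.
have {}IH := IH (fun i i_le => U_unitary i (leqW i_le)).
set S := \sum_(i < j.+1) _ in IH *; set j1 : R := j.+1%:R in IH *.
(* With weight [1/j1] the invariant [D <= j1 S] propagates, as
   [(1 + 1/j1) j1 = j1 + 1]. *)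
have j1V_gt0 : 0 < j1^-1 by rewrite invr_gt0 ltr0n.
have tri := vdist2_le (apply (QMQ c) (run U c j.+1)) (apply (QMQ c) (run U m j.+1))
  (apply (QMQ m) (run U m j.+1)) j1V_gt0.
rewrite QMQ_vdist2 invrK in tri; apply: le_trans tri _.
have D_le : (1 + j1^-1) * vdist2 (run U c j.+1) (run U m j.+1) <= (j1 + 1) * S.
  have -> : (j1 + 1) * S = (1 + j1^-1) * (j1 * S).
    by rewrite mulrA [in RHS]mulrDl mul1r mulVf ?pnatr_eq0 // mulrDl mul1r.
  by rewrite ler_wpM2l // addr_ge0 // invr_ge0 ler0n.
by rewrite -natr1 -/j1 mulrDr lerD // addrC.
Qed.

Lemma sum_vdist2_run_majority_le (B : {set concept n}) T :
  (forall i, (i <= T)%N -> unitary (U i)) ->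
  \sum_(c in B) vdist2 (run U c T) (run U (majority B) T)
    <= 4 * T%:R ^+ 2 * gamma B * #|B|%:R.
Proof.
move=> U_unitary; set m := majority B.
have run_m_unit i : (i < T)%N -> vnorm2 (run U m i) = 1.
  move=> i_lt_T; apply: vnorm2_run => j j_le_i; apply: U_unitary.
  exact: leq_trans j_le_i (ltnW i_lt_T).
apply: le_trans (_ : \sum_(c in B) T%:R * \sum_(i < T) 4 * diff_mass c m (run U m i) <= _).
  apply: ler_sum => c _; apply: le_trans (vdist2_run_le c m U_unitary) _.
  by rewrite ler_wpM2l // ler_sum // => i _; apply: vdist2_QMQ_le.
rewrite -mulr_sumr exchange_big /=.
apply: le_trans (_ : T%:R * \sum_(i < T) 4 * (gamma B * #|B|%:R) <= _).
  rewrite ler_wpM2l // ler_sum // => i _; rewrite -mulr_sumr ler_wpM2l //.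
  by apply: le_trans (sum_diff_mass_majority B _) _; rewrite run_m_unit ?mulr1.
rewrite sumr_const card_ord -mulr_natl; nra.
Qed.

Lemma sum_vdist2_run_ge (B : {set concept n}) T dec m :
  (forall i, (i <= T)%N -> unitary (U i)) -> (0 < #|B|)%N ->
  (forall c, c \in B -> 2 / 3 <= success_prob U T dec c) ->
  (#|B|%:R - 1) / 72 <= \sum_(c in B) vdist2 (run U c T) (run U m T).
Proof.
move=> U_unitary B_gt0 learns.
suff: (#|B|%:R - 1) * (1 / 36 / 2) <= \sum_(c in B) vdist2 (run U c T) (run U m T) by lra.
apply: sum_ge_pairwise => // [c | c1 c2 c1B c2B c1_neq_c2]; first exact: vnorm2_ge0.
have sep : 1 / 18 <= vdist2 (run U c1 T) (run U c2 T).
  apply: (@vdist2_separated _ (fun s => dec s == Some c1) (fun s => dec s == Some c2));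
    try exact: learns.
  - by move=> s /eqP ->.
  - by rewrite vnorm2_run.
have := vdist2_le (run U c1 T) (run U m T) (run U c2 T) ltr01.
by rewrite invr1 (vdist2C (run U m T)); lra.
Qed.

End Network.

Theorem theorem7 :
  exists kappa : R, 0 < kappa /\
  forall (n k : nat) (C : {set concept n}), (2 <= #|C|)%N ->
  forall (T : nat) (U : nat -> qop n k) (dec : basis n k -> option (concept n)),
    (forall i, (i <= T)%N -> unitary (U i)) ->
    (forall c, c \in C -> 2 / 3 <= success_prob U T dec c) ->
    kappa * Num.sqrt (1 / gammahat C) <= T%:R.
Proof.
exists (1 / 24); split; first lra.
move=> n k C C_ge2 T U dec U_unitary learns.
have [B /andP[B_sub_C B_ge2] <-] := gammahat_attained C_ge2.
have learnsB c : c \in B -> 2 / 3 <= success_prob U T dec c.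
  by move=> cB; apply: learns; apply: (subsetP B_sub_C).
have lower := sum_vdist2_run_ge (majority B) U_unitary (ltnW B_ge2) learnsB.
have upper := sum_vdist2_run_majority_le B U_unitary.
have B_ge2R : 2 <= #|B|%:R :> R by rewrite (ler_nat R 2).
have g_ge0 := gamma_ge0 B.
suff : Num.sqrt (1 / gamma B) <= 24 * T%:R by lra.
apply: sqrt_inv_le; first by rewrite mulr_ge0.
have := le_trans lower upper; nra.
Qed.
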